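(* Let $c>0$ and $P\ge 1$ be constants, and let $$\Omega=\{(u,v,L,A): 0\le A\le 1;\ u,v,L\ge 0;\ uv\le 1;\ uv\le L\le P\sqrt{uv}\},\qquad \Omega_0=\{(u,v,A): 0\le A\le 1;\ u,v\ge 0;\ uv\le 1\}.$$ There is no smooth function $B$ on $\Omega$ such that: (1) $0\le B(u,v,L,A)\le u$ on $\Omega$; (2) $\frac{\partial B}{\partial A}\ge c\,u\,L$ on $\Omega$; (3) $B$ is concave, i.e. $-d^2B\ge 0$ (the Hessian of $B$ is nonpositive definite) on $\Omega$; (4) the function $B_0(u,v,A):=\sup_{L:\,uv\le L\le P\sqrt{uv}}B(u,v,L,A)$ is concave on $\Omega_0$. *)

From Stdlib Require Import Reals List.
From Coquelicot Require Import Coquelicot.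
Open Scope R_scope.

(* Points of R^4, coordinates (u, v, L, A) indexed 0,1,2,3. *)
Definition pt := (R * R * R * R)%type.
Definition mkpt (u v L A : R) : pt := (u, v, L, A).

Definition coord (x : pt) (i : nat) : R :=
  match x with (u, v, L, A) =>
    match i with 0%nat => u | 1%nat => v | 2%nat => L | _ => A end end.

Definition shift (x : pt) (i : nat) (t : R) : pt :=
  match x with (u, v, L, A) =>
    match i with
    | 0%nat => (u + t, v, L, A)
    | 1%nat => (u, v + t, L, A)
    | 2%nat => (u, v, L + t, A)
    | _ => (u, v, L, A + t)
    end end.

Definition partial (i : nat) (f : pt -> R) : pt -> R :=
  fun x => Derive (fun t => f (shift x i t)) 0.

Fixpoint iter_partial (l : list nat) (f : pt -> R) : pt -> R :=
  match l with
  | nil => f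
  | i :: l' => partial i (iter_partial l' f)
  end.

Definition smooth_on (U : pt -> Prop) (f : pt -> R) : Prop :=
  forall (l : list nat) (x : pt), U x ->
    continuous (iter_partial l f) x /\
    forall i : nat, (i < 4)%nat -> ex_derive (fun t => iter_partial l f (shift x i t)) 0.

Definition Omega (P : R) (x : pt) : Prop :=
  match x with (u, v, L, A) =>
    0 <= A <= 1 /\ 0 <= u /\ 0 <= v /\ 0 <= L /\ u * v <= 1 /\
    u * v <= L <= P * sqrt (u * v)
  end.

Definition pt3 := (R * R * R)%type.
Definition Omega0 (x : pt3) : Prop :=
  match x with (u, v, A) => 0 <= A <= 1 /\ 0 <= u /\ 0 <= v /\ u * v <= 1 end.

Definition hessian_nonpos (f : pt -> R) (x : pt) : Prop :=
  forall h : pt,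
      fold_right Rplus 0
        (map (fun i => fold_right Rplus 0
           (map (fun j => coord h i * coord h j * iter_partial (i :: j :: nil) f x)
              (0 :: 1 :: 2 :: 3 :: nil)%nat))
         (0 :: 1 :: 2 :: 3 :: nil)%nat) <= 0.

Definition B0 (P : R) (B : pt -> R) (y : pt3) : R :=
  match y with (u, v, A) =>
    real (Lub_Rbar (fun z => exists L, u * v <= L <= P * sqrt (u * v) /\
                                        z = B (u, v, L, A)))
  end.

(* Concavity on a (possibly non-convex) set D: concave along every
   segment entirely contained in D. *)
Definition comb3 (t : R) (x y : pt3) : pt3 :=
  match x, y with (a1, b1, c1), (a2, b2, c2) =>
    ((1 - t) * a1 + t * a2, (1 - t) * b1 + t * b2, (1 - t) * c1 + t * c2) end.

Definition concave_on3 (D : pt3 -> Prop) (g : pt3 -> R) : Prop :=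
  forall x y : pt3,
    (forall s, 0 <= s <= 1 -> D (comb3 s x y)) ->
    forall t, 0 <= t <= 1 ->
      (1 - t) * g x + t * g y <= g (comb3 t x y).

From Stdlib Require Import Reals List Lra Lia.
From Coquelicot Require Import Coquelicot.
Open Scope R_scope.

(* Only properties (1), (2) and (4) are needed.  On the hyperbola uv = 1 the
   window uv <= L <= P sqrt(uv) forces L >= 1, so B_0 grows in A at rate at
   least c u there, while 0 <= B_0 <= u.  If B_0(u, v, 1/2) >= m u on the
   hyperbola, concavity towards the faces u = 0 and A = 0 (where B_0 >= 0)
   gives lower bounds at (u(1+t), v(1-t), 3/4) and (u(1-t), v(1+t), 1/4); the
   chord between them stays in uv <= 1 and has midpoint (u, v, 1/2).  For
   t = 2/(2+c) this yields B_0(u, v, 1/2) >= (m + c/8) u, and iterating the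
   improvement contradicts B_0 <= u. *)

Lemma is_derive_translate (f : R -> R) (a d : R) :
  is_derive (fun t => f (a + t)) 0 d -> is_derive f a d.
Proof.
  intro H.
  assert (H1 : is_derive (fun y => (fun t => f (a + t)) (y - a)) a (scal 1 d)).
  { apply (is_derive_comp (fun t => f (a + t)) (fun y => y - a) a d 1).
    - replace (a - a) with 0 by ring. exact H.
    - auto_derive; auto; ring. }
  replace (scal 1 d) with d in H1 by (unfold scal; simpl; unfold mult; simpl; ring).
  exact (is_derive_ext _ _ _ _ (fun t => f_equal f (Rplus_minus a t)) H1).
Qed.

Lemma derive_ge_increment (f df : R -> R) (a b k : R) :
  a <= b ->
  (forall x, a <= x <= b -> is_derive f x (df x)) ->
  (forall x, a <= x <= b -> k <= df x) ->
  k * (b - a) <= f b - f a.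
Proof.
  intros Hab Hd Hk.
  destruct (MVT_gen f a b df) as [x [Hx ->]].
  - intros x Hx. rewrite Rmin_left, Rmax_right in Hx by lra. apply Hd; lra.
  - intros x Hx. rewrite Rmin_left, Rmax_right in Hx by lra.
    apply continuity_pt_filterlim, (ex_derive_continuous (K := R_AbsRing) (V := R_NormedModule)).
    exists (df x). apply Hd; lra.
  - rewrite Rmin_left, Rmax_right in Hx by lra.
    apply Rmult_le_compat_r; [lra | apply Hk; lra].
Qed.

Lemma smooth_on_is_derive_A (U : pt -> Prop) (B : pt -> R) (u v L a : R) :
  smooth_on U B -> U (u, v, L, a) ->
  is_derive (fun a' => B (u, v, L, a')) a (partial 3 B (u, v, L, a)).
Proof.
  intros hB hU. apply is_derive_translate.
  destruct (hB nil _ hU) as [_ hex].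
  exact (Derive_correct _ _ (hex 3%nat ltac:(lia))).
Qed.

Lemma real_Lub_Rbar_spec (E : R -> Prop) (z0 K : R) :
  E z0 -> (forall z, E z -> z <= K) ->
  (forall z, E z -> z <= real (Lub_Rbar E)) /\
  (forall M, (forall z, E z -> z <= M) -> real (Lub_Rbar E) <= M).
Proof.
  intros Hz0 HK.
  destruct (Lub_Rbar_correct E) as [Hub Hl].
  destruct (Lub_Rbar E) as [l| |].
  - split; [exact Hub | intros M HM; exact (Hl (Finite M) HM)].
  - destruct (Hl (Finite K) HK).
  - destruct (Hub z0 Hz0).
Qed.

Lemma sqrt_ge_self (x : R) : 0 <= x <= 1 -> x <= sqrt x.
Proof.
  intros Hx.
  assert (Hs : sqrt x <= 1) by (rewrite <- sqrt_1; apply sqrt_le_1_alt; lra).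
  assert (H0 := sqrt_pos x).
  rewrite <- (sqrt_sqrt x) at 1 by lra. nra.
Qed.

Section Supremum_in_L.

Variables (P : R) (B : pt -> R).
Hypothesis hP : 1 <= P.
Hypothesis hB : forall u v L A, Omega P (u, v, L, A) -> 0 <= B (u, v, L, A) <= u.

Lemma window_nonempty (u v : R) : 0 <= u * v <= 1 -> u * v <= P * sqrt (u * v).
Proof.
  intros Huv. assert (H1 := sqrt_ge_self _ Huv). assert (H2 := sqrt_pos (u * v)). nra.
Qed.

Lemma Omega_of_window (u v L A : R) :
  Omega0 (u, v, A) -> u * v <= L <= P * sqrt (u * v) -> Omega P (u, v, L, A).
Proof. intros (HA & Hu & Hv & Huv) HL. simpl. assert (0 <= u * v) by nra. repeat split; lra. Qed.

Lemma B0_spec (u v A : R) : Omega0 (u, v, A) ->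
  (forall L, u * v <= L <= P * sqrt (u * v) -> B (u, v, L, A) <= B0 P B (u, v, A)) /\
  (forall M, (forall L, u * v <= L <= P * sqrt (u * v) -> B (u, v, L, A) <= M) ->
     B0 P B (u, v, A) <= M).
Proof.
  intros HO. pose proof HO as (HA & Hu & Hv & Huv).
  assert (Hwin := window_nonempty u v ltac:(nra)).
  destruct (real_Lub_Rbar_spec
              (fun z => exists L, u * v <= L <= P * sqrt (u * v) /\ z = B (u, v, L, A))
              (B (u, v, u * v, A)) u) as [Hup Hleast].
  - exists (u * v). split; [lra | reflexivity].
  - intros z [L [HL ->]]. exact (proj2 (hB _ _ _ _ (Omega_of_window _ _ _ _ HO HL))).
  - split.
    + intros L HL. apply Hup. exists L. auto.
    + intros M HM. apply Hleast. intros z [L [HL ->]]. auto.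
Qed.

Lemma B0_nonneg (u v A : R) : Omega0 (u, v, A) -> 0 <= B0 P B (u, v, A).
Proof.
  intros HO. pose proof HO as (HA & Hu & Hv & Huv).
  assert (HL : u * v <= u * v <= P * sqrt (u * v)) by (split; [lra | apply window_nonempty; nra]).
  apply Rle_trans with (B (u, v, u * v, A)).
  - exact (proj1 (hB _ _ _ _ (Omega_of_window _ _ _ _ HO HL))).
  - exact (proj1 (B0_spec _ _ _ HO) _ HL).
Qed.

Lemma B0_le_u (u v A : R) : Omega0 (u, v, A) -> B0 P B (u, v, A) <= u.
Proof.
  intros HO. apply (proj2 (B0_spec _ _ _ HO)). intros L HL.
  exact (proj2 (hB _ _ _ _ (Omega_of_window _ _ _ _ HO HL))).
Qed.

Lemma B0_increment_on_hyperbola (c : R) (U : pt -> Prop) :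
  0 <= c -> (forall x, Omega P x -> U x) -> smooth_on U B ->
  (forall u v L A, Omega P (u, v, L, A) -> partial 3 B (u, v, L, A) >= c * u * L) ->
  forall u v a1 a2, 0 <= u -> 0 <= v -> u * v = 1 -> 0 <= a1 -> a1 <= a2 -> a2 <= 1 ->
  B0 P B (u, v, a1) + c * u * (a2 - a1) <= B0 P B (u, v, a2).
Proof.
  intros hc hU hBsmooth hBA u v a1 a2 Hu Hv Huv Ha1 Ha12 Ha2.
  assert (HO : forall a, 0 <= a <= 1 -> Omega0 (u, v, a)) by (intros a Ha; simpl; lra).
  enough (B0 P B (u, v, a1) <= B0 P B (u, v, a2) - c * u * (a2 - a1)) by lra.
  apply (proj2 (B0_spec _ _ _ (HO a1 ltac:(lra)))). intros L HL.
  assert (Hgain : c * u * L * (a2 - a1) <= B (u, v, L, a2) - B (u, v, L, a1)).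
  { apply (derive_ge_increment (fun a => B (u, v, L, a)) (fun a => partial 3 B (u, v, L, a)));
      [lra | intros a Ha .. ];
      assert (HOm := Omega_of_window u v L a (HO a ltac:(lra)) HL).
    - exact (smooth_on_is_derive_A U B u v L a hBsmooth (hU _ HOm)).
    - exact (Rge_le _ _ (hBA _ _ _ _ HOm)). }
  assert (HB2 := proj1 (B0_spec _ _ _ (HO a2 ltac:(lra))) L HL).
  rewrite Huv in HL.
  assert (c * u * (a2 - a1) <= c * u * L * (a2 - a1)).
  { assert (0 <= c * u * (a2 - a1) * (L - 1)).
    { apply Rmult_le_pos; [apply Rmult_le_pos; [apply Rmult_le_pos|] |]; lra. }
    nra. }
  lra.
Qed.

End Supremum_in_L.

Section Concave_on_Omega0.

Variables (c : R) (G : pt3 -> R).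
Hypothesis hc : 0 < c.
Hypothesis hG_concave : concave_on3 Omega0 G.
Hypothesis hG_nonneg : forall u v A, Omega0 (u, v, A) -> 0 <= G (u, v, A).
Hypothesis hG_le_u : forall u v A, Omega0 (u, v, A) -> G (u, v, A) <= u.
Hypothesis hG_increment :
  forall u v a1 a2, 0 <= u -> 0 <= v -> u * v = 1 -> 0 <= a1 -> a1 <= a2 -> a2 <= 1 ->
  G (u, v, a1) + c * u * (a2 - a1) <= G (u, v, a2).

Lemma concave_ge_scaled (z x : pt3) (t : R) :
  (forall s, 0 <= s <= 1 -> Omega0 (comb3 s z x)) -> 0 <= G z -> 0 <= t <= 1 ->
  t * G x <= G (comb3 t z x).
Proof.
  intros Hseg Hz Ht. assert (H := hG_concave z x Hseg t Ht).
  assert (0 <= (1 - t) * G z) by (apply Rmult_le_pos; lra). lra.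
Qed.

Lemma G_scale_u (x y a l b : R) :
  Omega0 (x, y, a) -> 0 <= l <= 1 -> b <= G (x, y, a) -> l * b <= G (l * x, y, a).
Proof.
  intros HO Hl Hb. pose proof HO as (Ha & Hx & Hy & Hxy).
  replace (l * x, y, a) with (comb3 l (0, y, a) (x, y, a)) by (simpl; f_equal; [f_equal|]; ring).
  apply Rle_trans with (l * G (x, y, a)); [apply Rmult_le_compat_l; lra|].
  apply concave_ge_scaled; [| apply hG_nonneg; simpl; lra | lra].
  intros s Hs. simpl. repeat split; nra.
Qed.

Lemma G_scale_A (x y a l b : R) :
  Omega0 (x, y, a) -> 0 <= l <= 1 -> b <= G (x, y, a) -> l * b <= G (x, y, l * a).
Proof.
  intros HO Hl Hb. pose proof HO as (Ha & Hx & Hy & Hxy).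
  replace (x, y, l * a) with (comb3 l (x, y, 0) (x, y, a)) by (simpl; f_equal; [f_equal|]; ring).
  apply Rle_trans with (l * G (x, y, a)); [apply Rmult_le_compat_l; lra|].
  apply concave_ge_scaled; [| apply hG_nonneg; simpl; lra | lra].
  intros s Hs. simpl. repeat split; nra.
Qed.

Lemma Omega0_hyperbola_chord (u v t a1 a2 : R) :
  0 < u -> 0 < v -> u * v = 1 -> 0 <= t <= 1 -> 0 <= a1 <= 1 -> 0 <= a2 <= 1 ->
  forall s, 0 <= s <= 1 ->
    Omega0 (comb3 s (u * (1 + t), v * (1 - t), a1) (u * (1 - t), v * (1 + t), a2)).
Proof.
  intros Hu Hv Huv Ht Ha1 Ha2 s Hs. simpl.
  replace (((1 - s) * (u * (1 + t)) + s * (u * (1 - t))) *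
           ((1 - s) * (v * (1 - t)) + s * (v * (1 + t))))
    with ((u * v) * (1 - t ^ 2 * (1 - 2 * s) ^ 2)) by ring.
  rewrite Huv.
  assert (0 <= t ^ 2 * (1 - 2 * s) ^ 2) by (apply Rmult_le_pos; apply pow2_ge_0).
  assert (0 <= u * (1 - t) /\ 0 <= v * (1 - t)) by (split; apply Rmult_le_pos; lra).
  assert (0 <= u * (1 + t) /\ 0 <= v * (1 + t)) by (split; apply Rmult_le_pos; lra).
  repeat split; try nra; apply Rplus_le_le_0_compat; apply Rmult_le_pos; lra.
Qed.

Lemma bound_below_hyperbola (a b p q u v : R) :
  0 <= a <= 1 -> 0 <= p -> 0 < q -> p * q <= 1 ->
  (forall u' v', 0 < u' -> 0 < v' -> u' * v' = 1 -> u' * b <= G (u', v', a)) ->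
  0 < u -> 0 < v -> u * v = 1 -> p * u * b <= G (u * p, v * q, a).
Proof.
  intros Ha Hp Hq Hpq hb Hu Hv Huv.
  (* (u p, v q) lies between the face u = 0 and the hyperbola point (u / q, v q). *)
  replace (p * u * b) with (p * q * (u / q * b)) by (field; lra).
  replace (u * p) with (p * q * (u / q)) by (field; lra).
  assert (Hu' : 0 < u / q) by (apply Rdiv_lt_0_compat; lra).
  assert (Huv' : u / q * (v * q) = 1) by (field_simplify; lra).
  apply G_scale_u; [simpl; nra | nra |].
  apply hb; [exact Hu' | nra | exact Huv'].
Qed.

Definition hyperbola_ratio_ge (m : R) : Prop :=
  forall u v, 0 < u -> 0 < v -> u * v = 1 -> u * m <= G (u, v, 1 / 2).

Section Improvement.

Variable m : R.
Hypothesis hm : hyperbola_ratio_ge m.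

Lemma hyperbola_ratio_le_1 : m <= 1.
Proof.
  assert (H1 := hm 1 1 ltac:(lra) ltac:(lra) ltac:(lra)).
  assert (H2 := hG_le_u 1 1 (1 / 2) ltac:(simpl; lra)). lra.
Qed.

Lemma hyperbola_bound_3_4 (u v : R) :
  0 < u -> 0 < v -> u * v = 1 -> u * (m + c / 4) <= G (u, v, 3 / 4).
Proof.
  intros Hu Hv Huv.
  assert (H1 := hm u v Hu Hv Huv).
  assert (H2 := hG_increment u v (1 / 2) (3 / 4) ltac:(lra) ltac:(lra) Huv
                  ltac:(lra) ltac:(lra) ltac:(lra)).
  lra.
Qed.

Lemma hyperbola_bound_1_4 (u v : R) :
  0 < u -> 0 < v -> u * v = 1 -> u * (m / 2) <= G (u, v, 1 / 4).
Proof.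
  intros Hu Hv Huv.
  replace (u * (m / 2)) with (1 / 2 * (u * m)) by field.
  replace (1 / 4) with (1 / 2 * (1 / 2)) by field.
  apply G_scale_A; [simpl; lra | lra | exact (hm u v Hu Hv Huv)].
Qed.

Lemma hyperbola_ratio_ge_step : hyperbola_ratio_ge (m + c / 8).
Proof.
  intros u v Hu Hv Huv.
  set (t := 2 / (2 + c)).
  assert (Ht : t * (2 + c) = 2) by (unfold t; field; lra).
  assert (Ht0 : 0 < t) by (unfold t; apply Rdiv_lt_0_compat; lra).
  assert (Ht1 : t < 1) by nra.
  assert (Hl : (1 + t) * (1 - t) <= 1) by nra.
  assert (HX := bound_below_hyperbola (3 / 4) (m + c / 4) (1 + t) (1 - t) u v
                 ltac:(lra) ltac:(lra) ltac:(lra) Hl hyperbola_bound_3_4 Hu Hv Huv).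
  assert (HY := bound_below_hyperbola (1 / 4) (m / 2) (1 - t) (1 + t) u v
                 ltac:(lra) ltac:(lra) ltac:(lra) ltac:(nra) hyperbola_bound_1_4 Hu Hv Huv).
  assert (Hmid := hG_concave _ _
                    (Omega0_hyperbola_chord u v t (3 / 4) (1 / 4) Hu Hv Huv
                       ltac:(lra) ltac:(lra) ltac:(lra)) (1 / 2) ltac:(lra)).
  replace (comb3 (1 / 2) (u * (1 + t), v * (1 - t), 3 / 4) (u * (1 - t), v * (1 + t), 1 / 4))
    with (u, v, 1 / 2) in Hmid by (simpl; f_equal; [f_equal|]; field).
  (* The choice of t makes the gain t c / 8 exactly offset the loss (1 - t) / 4. *)
  assert (u * (1 - t) * (1 - m) >= 0).
  { apply Rle_ge, Rmult_le_pos; [nra | assert (H := hyperbola_ratio_le_1); lra]. }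
  nra.
Qed.

End Improvement.

Lemma hyperbola_ratio_ge_nat (n : nat) : hyperbola_ratio_ge (INR n * (c / 8)).
Proof.
  induction n as [|n IH].
  - intros u v Hu Hv Huv. rewrite Rmult_0_l, Rmult_0_r. apply hG_nonneg. simpl; lra.
  - rewrite S_INR, Rmult_plus_distr_r, Rmult_1_l. exact (hyperbola_ratio_ge_step _ IH).
Qed.

Theorem no_increasing_concave_on_Omega0 : False.
Proof.
  destruct (INR_archimed (c / 8) 1) as [n Hn]; [lra|].
  assert (H1 := hyperbola_ratio_ge_nat n 1 1 ltac:(lra) ltac:(lra) ltac:(lra)).
  assert (H2 := hG_le_u 1 1 (1 / 2) ltac:(simpl; lra)).
  lra.
Qed.

End Concave_on_Omega0.

Theorem mainTheorem5 (c P : R) (hc : 0 < c) (hP : 1 <= P) :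
  ~ exists B : pt -> R,
      (exists U : pt -> Prop, open U /\ (forall x, Omega P x -> U x) /\ smooth_on U B) /\
      (forall u v L A, Omega P (u, v, L, A) -> 0 <= B (u, v, L, A) <= u) /\
      (forall u v L A, Omega P (u, v, L, A) -> partial 3 B (u, v, L, A) >= c * u * L) /\
      (forall x, Omega P x -> hessian_nonpos B x) /\
      concave_on3 Omega0 (B0 P B).
Proof.
  intros [B [[U [_ [hU hBsmooth]]] [hB [hBA [_ hconc]]]]].
  apply (no_increasing_concave_on_Omega0 c (B0 P B) hc hconc).
  - exact (B0_nonneg P B hP hB).
  - exact (B0_le_u P B hP hB).
  - exact (B0_increment_on_hyperbola P B hP hB c U (Rlt_le _ _ hc) hU hBsmooth hBA).
Qed.
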